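(* Let $\mathbf{P}$ be a finite poset with a metric $d_{\mathbf{P}}$ and let $\sigma:\mathbf{P}\to\mathbf{P}$ be a monotone map with $x\le\sigma(x)$ for all $x\in\mathbf{P}$. On $\hat{\mathbf{Q}}=\mathbf{P}\times\{0,1\}$ define $(x,i)\le(y,j)$ iff $\sigma(x)\le y$ when $i\neq j$, and iff $x\le y$ when $i=j$. Write $x_L=(x,0)$, $x_R=(x,1)$. Then: (1) this relation is a preorder on $\hat{\mathbf{Q}}$; (2) for the associated equivalence relation $\sim$ ($u\sim v$ iff $u\le v$ and $v\le u$), the class of $(x,i)$ is $\{x_L,x_R\}$ if $\sigma(x)=x$ and $\{(x,i)\}$ otherwise; let $\mathbf{Q}=\hat{\mathbf{Q}}/\!\sim$ be the quotient poset with classes $[u]$; (3) the maps $g:\mathbf{P}\to\mathbf{Q}$, $g(x)=[x_L]$, and $f:\mathbf{Q}\to\mathbf{P}$, $f([x_L])=x$, $f([x_R])=\sigma(x)$, are well defined and form a Galois insertion $f:\mathbf{Q}\rightleftarrows\mathbf{P}:g$; (4) similarly $i:\mathbf{P}\to\mathbf{Q}$, $i(x)=[x_R]$, and $h:\mathbf{Q}\to\mathbf{P}$, $h([x_L])=\sigma(x)$, $h([x_R])=x$, form a Galois insertion $h:\mathbf{Q}\rightleftarrows\mathbf{P}:i$; (5) for $\mathbf{P}$-modules $M,N$, if $\Gamma$ is a $\mathbf{Q}$-module with $g^*\Gamma\cong M$ and $i^*\Gamma\cong N$, then $(\mathbf{Q},f\dashv g,h\dashv i,\Gamma)$ is a Galois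 coupling of $(M,N)$ with $\mathrm{cost}(\Gamma)=\sup_{x\in\mathbf{P}}d_{\mathbf{P}}(x,\sigma(x))$; in particular, if $M=N\circ\sigma$, then $\Gamma:=h^*N=N\circ h$ gives such a Galois coupling.
   Context: Fix a field $k$; $\mathrm{vect}$ is the category of finite-dimensional $k$-vector spaces. Finite posets are categories with a unique morphism $x\to y$ iff $x\le y$; a $\mathbf{P}$-module is a functor $\mathbf{P}\to\mathrm{vect}$; for a monotone map $g$, $g^*$ is precomposition with $g$. A Galois insertion $f:\mathbf{Q}\rightleftarrows\mathbf{P}:g$ consists of monotone maps $f:\mathbf{Q}\to\mathbf{P}$, $g:\mathbf{P}\to\mathbf{Q}$ with $f(u)\le x\iff u\le g(x)$ for all $u,x$, and $f\circ g=\mathrm{id}_{\mathbf{P}}$. A Galois coupling of $(M,N)$ is $(\mathbf{Q},f\dashv g,h\dashv i,\Gamma)$ with $\mathbf{Q}$ a finite poset, $f:\mathbf{Q}\rightleftarrows\mathbf{P}:g$ and $h:\mathbf{Q}\rightleftarrows\mathbf{P}:i$ Galois insertions, and a $\mathbf{Q}$-module $\Gamma$ with $g^*\Gamma\cong M$, $i^*\Gamma\cong N$; its cost is $\mathrm{cost}(\Gamma)=\sup_{q\in\mathbf{Q}}d_{\mathbf{P}}(f(q),h(q))$. *)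

From HB Require Import structures.
From mathcomp Require Import all_boot all_order all_algebra.
Set Implicit Arguments. Unset Strict Implicit. Unset Printing Implicit Defensive.
Import Order.TTheory GRing.Theory Num.Theory.
Local Open Scope ring_scope.

Definition is_poset (T : finType) (le : rel T) : Prop :=
  [/\ reflexive le, antisymmetric le & transitive le].

Definition monotone (S T : finType) (leS : rel S) (leT : rel T) (f : S -> T) :=
  forall x y, leS x y -> leT (f x) (f y).

Definition galois_insertion (Q P : finType) (leQ : rel Q) (leP : rel P)
  (f : Q -> P) (g : P -> Q) : Prop :=
  [/\ monotone leQ leP f, monotone leP leQ g,
      (forall u x, leP (f u) x = leQ u (g x)) & (forall x, f (g x) = x)].

(* ---------- modules: functors (T,le) -> vect_k, in matrix form ------
   a vector space at x is k^(dim x) (row vectors); the structure map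
   x -> y (for x <= y) is the matrix mor x y (acting on the right). *)
Record pmod (k : fieldType) (T : finType) := PMod {
  pdim : T -> nat;
  pmor : forall x y : T, 'M[k]_(pdim x, pdim y) }.

Definition is_module (k : fieldType) (T : finType) (le : rel T) (M : pmod k T) :=
  (forall x, pmor M x x = 1%:M) /\
  (forall x y z, le x y -> le y z -> pmor M x y *m pmor M y z = pmor M x z).

Definition mod_iso (k : fieldType) (T : finType) (le : rel T) (M N : pmod k T) :=
  exists (phi : forall x, 'M[k]_(pdim M x, pdim N x))
         (psi : forall x, 'M[k]_(pdim N x, pdim M x)),
    (forall x, phi x *m psi x = 1%:M /\ psi x *m phi x = 1%:M) /\
    (forall x y, le x y -> pmor M x y *m phi y = phi x *m pmor N x y).

Definition pullback (k : fieldType) (T S : finType) (g : T -> S) (M : pmod k S)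
  : pmod k T := @PMod k T (fun x => pdim M (g x)) (fun x y => pmor M (g x) (g y)).

Definition is_metric (R : realFieldType) (T : Type) (d : T -> T -> R) :=
  [/\ forall x y, d x y = 0 <-> x = y, forall x y, d x y = d y x
    & forall x y z, d x z <= d x y + d y z].

Definition galois_coupling (k : fieldType) (d0 : Order.disp_t)
  (P : finPOrderType d0) (M N : pmod k P) (Q : finType) (leQ : rel Q)
  (f g' : _) (h i' : _) (Gam : pmod k Q) : Prop :=
  [/\ is_poset leQ, @galois_insertion Q P leQ <=%O f g',
      @galois_insertion Q P leQ <=%O h i', is_module leQ Gam &
      mod_iso <=%O (pullback g' Gam) M /\ mod_iso <=%O (pullback i' Gam) N].

(* cost = sup_q d(f q, h q)  (distances are >= 0, so 0 is a neutral start) *)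
Definition coupling_cost (R : realFieldType) (Q P : finType) (d : P -> P -> R)
  (f h : Q -> P) : R := \big[Num.max/0]_(q : Q) d (f q) (h q).

Section Construction.
Context {d0 : Order.disp_t} (P : finPOrderType d0) (sigma : P -> P).

Definition Qhat := (P * bool)%type.   (* false = L, true = R *)

Definition hle (u v : Qhat) : bool :=
  if u.2 == v.2 then (u.1 <= v.1)%O else (sigma u.1 <= v.1)%O.

Definition hequiv (u v : Qhat) : bool := hle u v && hle v u.

Definition hclass (u : Qhat) : {set Qhat} := [set v | hequiv u v].

Definition Qt := {S : {set Qhat} | [exists u, S == hclass u]}.

Lemma qclass_proof (u : Qhat) : [exists v, hclass u == hclass v].
Proof. by apply/existsP; exists u. Qed.

Definition qclass (u : Qhat) : Qt := exist _ (hclass u) (qclass_proof u).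

Definition Qle (S T : Qt) : bool :=
  [exists u in val S, exists v in val T, hle u v].

Definition gQ (x : P) : Qt := qclass (x, false).
Definition iQ (x : P) : Qt := qclass (x, true).
Definition fhat (u : Qhat) : P := if u.2 then sigma u.1 else u.1.
Definition hhat (u : Qhat) : P := if u.2 then u.1 else sigma u.1.

End Construction.

From mathcomp Require Import all_boot all_order all_algebra.
Set Implicit Arguments. Unset Strict Implicit. Unset Printing Implicit Defensive.
Import Order.TTheory GRing.Theory Num.Theory.
Local Open Scope ring_scope.

(* Since sigma is monotone and inflationary, [hle] is transitive, and x_L, x_R
   are identified exactly when sigma x = x.  The maps f and h are defined on
   representatives; the adjunctions f u <= x <-> u <= x_L and h u <= x <-> u <= x_R
   hold already on Qhat, and they force f and h to be constant on classes and
   yield all the Galois insertion axioms.  The cost is computed from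
   d(f [x_L], h [x_L]) = d(x, sigma x) and d(f [x_R], h [x_R]) = d(sigma x, x). *)

Lemma bigmax_le_image {disp : Order.disp_t} (T : orderType disp) (I J : finType)
    (x0 : T) (F : I -> T) (G : J -> T) :
  (forall i, exists j, F i = G j) ->
  (\big[Order.max/x0]_i F i <= \big[Order.max/x0]_j G j)%O.
Proof.
move=> FG; apply/bigmax_leP; split; first by rewrite bigmax_idl le_max lexx.
by move=> i _; have [j ->] := FG i; exact: le_bigmax.
Qed.

Lemma eq_bigmax_image {disp : Order.disp_t} (T : orderType disp) (I J : finType)
    (x0 : T) (F : I -> T) (G : J -> T) :
  (forall i, exists j, F i = G j) -> (forall j, exists i, G j = F i) ->
  \big[Order.max/x0]_i F i = \big[Order.max/x0]_j G j.
Proof. by move=> FG GF; apply/le_anti; rewrite !bigmax_le_image. Qed.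

Section Pullback.
Variables (k : fieldType) (S T : finType).

Lemma pullback_module (leS : rel S) (leT : rel T) (a : T -> S) (N : pmod k S) :
  is_module leS N -> monotone leT leS a -> is_module leT (pullback a N).
Proof. by move=> [N1 N2] a_mono; split=> [x|x y z xy yz] /=; rewrite ?N1 ?N2 ?a_mono. Qed.

Lemma pullback_iso (leT : rel T) (N : pmod k S) (a b : T -> S) :
  (forall x, pmor N x x = 1%:M) -> a =1 b -> mod_iso leT (pullback a N) (pullback b N).
Proof.
move=> N1 ab; exists (fun x => pmor N (a x) (b x)), (fun x => pmor N (b x) (a x)).
split=> [x | x y _] /=; rewrite !ab ?N1 ?mulmx1 ?mul1mx //.
Qed.

End Pullback.

Section Construction.
Context {d0 : Order.disp_t} (P : finPOrderType d0) (sigma : P -> P).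

Lemma fhat_adjoint u x : (fhat sigma u <= x)%O = hle sigma u (x, false).
Proof. by case: u => a []. Qed.

Lemma hhat_adjoint u x : (hhat sigma u <= x)%O = hle sigma u (x, true).
Proof. by case: u => a []. Qed.

Lemma hle_refl : reflexive (hle sigma).
Proof. by move=> u; rewrite /hle eqxx lexx. Qed.

Lemma hequiv_refl : reflexive (hequiv sigma).
Proof. by move=> u; rewrite /hequiv hle_refl. Qed.

Hypothesis sigma_mono : {homo sigma : x y / (x <= y)%O}.
Hypothesis sigma_infl : forall x, (x <= sigma x)%O.

Lemma hle_trans : transitive (hle sigma).
Proof.
move=> [y j] [x i] [z l]; rewrite /hle /=.
case: i; case: j; case: l => //= xy yz.
all: first [ exact: le_trans xy yz | exact: le_trans (sigma_mono xy) yz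
           | exact: le_trans (sigma_infl x) (le_trans xy (le_trans (sigma_infl y) yz)) ].
Qed.

Lemma hequiv_trans : transitive (hequiv sigma).
Proof.
move=> v u w /andP[uv vu] /andP[vw wv].
by apply/andP; split; [exact: hle_trans uv vw | exact: hle_trans wv vu].
Qed.

Lemma hequiv_sym : symmetric (hequiv sigma).
Proof. by move=> u v; rewrite /hequiv andbC. Qed.

Lemma hequivE x b y c :
  hequiv sigma (x, b) (y, c) = (x == y) && ((b == c) || (sigma x == x)).
Proof.
rewrite /hequiv /hle /= (eq_sym c b); case: (eqVneq b c) => [_|_] /=.
  by rewrite andbT -eq_le.
apply/andP/andP => [[sxy syx] | [/eqP<- /eqP sx]]; last by rewrite sx lexx.
have xy : (x <= y)%O := le_trans (sigma_infl x) sxy.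
have yx : (y <= x)%O := le_trans (sigma_infl y) syx.
have exy : x = y by apply/le_anti; rewrite xy yx.
by rewrite exy eqxx eq_le sigma_infl andbT -{1}exy sxy.
Qed.

Lemma hclassE x b : hclass sigma (x, b) =
  if sigma x == x then [set (x, false); (x, true)] else [set (x, b)].
Proof.
apply/setP => -[y c]; rewrite inE hequivE eq_sym.
by case: ifP => _; rewrite !inE !xpair_eqE ?orbT ?orbF; case: b c => [] [];
  rewrite ?andbT ?andbF ?orbF.
Qed.

Lemma qclass_eqP u v : reflect (qclass sigma u = qclass sigma v) (hequiv sigma u v).
Proof.
apply: (iffP idP) => [uv | /(congr1 val) /= uv].
  apply: val_inj; apply/setP => w; rewrite !inE.
  apply/idP/idP => [uw | vw]; last exact: hequiv_trans uv vw.
  by rewrite hequiv_sym in uv; exact: hequiv_trans uv uw.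
have : v \in hclass sigma v by rewrite inE hequiv_refl.
by rewrite -uv inE.
Qed.

Definition qrep (C : Qt sigma) : Qhat P := xchoose (existsP (valP C)).

Lemma qrepK : cancel qrep (qclass sigma).
Proof. by move=> C; apply: val_inj; apply/esym/eqP; exact: (xchooseP (existsP (valP C))). Qed.

Lemma qclassW (Pr : Qt sigma -> Prop) : (forall u, Pr (qclass sigma u)) -> forall C, Pr C.
Proof. by move=> Pu C; rewrite -(qrepK C). Qed.

Lemma Qle_qclass u v : Qle (qclass sigma u) (qclass sigma v) = hle sigma u v.
Proof.
apply/existsP/idP => [[u' /andP[]] | uv].
  rewrite /= inE => /andP[uu' _] /existsP[v' /andP[]].
  rewrite /= inE => /andP[_ v'v] u'v'.
  exact: hle_trans (hle_trans uu' u'v') v'v.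
exists u; rewrite /= inE hequiv_refl /=.
by apply/existsP; exists v; rewrite /= inE hequiv_refl.
Qed.

Lemma Qle_poset : is_poset (Qle (sigma:=sigma)).
Proof.
split.
- by elim/qclassW => u; rewrite Qle_qclass hle_refl.
- by elim/qclassW => u; elim/qclassW => v; rewrite !Qle_qclass => /qclass_eqP.
- elim/qclassW => v; elim/qclassW => u; elim/qclassW => w.
  rewrite !Qle_qclass; exact: hle_trans.
Qed.

Definition qlift (F : Qhat P -> P) (C : Qt sigma) : P := F (qrep C).

Section Insertion.
Variables (F : Qhat P -> P) (b : bool).
Hypothesis F_adjoint : forall u x, (F u <= x)%O = hle sigma u (x, b).
Hypothesis F_section : forall x, F (x, b) = x.

Lemma hle_adjoint_unit u : hle sigma u (F u, b).
Proof. by rewrite -F_adjoint. Qed.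

Lemma adjoint_homo u v : hle sigma u v -> (F u <= F v)%O.
Proof. by move=> uv; rewrite F_adjoint (hle_trans uv (hle_adjoint_unit v)). Qed.

Lemma qlift_qclass u : qlift F (qclass sigma u) = F u.
Proof.
have /andP[uv vu] : hequiv sigma (qrep (qclass sigma u)) u.
  by apply/qclass_eqP; rewrite qrepK.
by apply/le_anti; rewrite !adjoint_homo.
Qed.

Lemma galois_insertion_qlift :
  galois_insertion (Qle (sigma:=sigma)) <=%O (qlift F) (fun x => qclass sigma (x, b)).
Proof.
split.
- by elim/qclassW => u; elim/qclassW => v; rewrite Qle_qclass !qlift_qclass; exact: adjoint_homo.
- by move=> x y; rewrite Qle_qclass /hle eqxx.
- by elim/qclassW => u x; rewrite Qle_qclass qlift_qclass F_adjoint.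
- by move=> x; rewrite qlift_qclass F_section.
Qed.

End Insertion.

Lemma qlift_fhat_qclass u : qlift (fhat sigma) (qclass sigma u) = fhat sigma u.
Proof. exact/qlift_qclass/fhat_adjoint. Qed.

Lemma qlift_hhat_qclass u : qlift (hhat sigma) (qclass sigma u) = hhat sigma u.
Proof. exact/qlift_qclass/hhat_adjoint. Qed.

Lemma coupling_cost_qlift (R : realFieldType) (dP : P -> P -> R) :
  is_metric dP ->
  coupling_cost dP (qlift (fhat sigma)) (qlift (hhat sigma)) =
  \big[Num.max/0]_(x : P) dP x (sigma x).
Proof.
move=> [_ dP_sym _]; apply: eq_bigmax_image.
  by elim/qclassW => -[x c]; exists x; rewrite qlift_fhat_qclass qlift_hhat_qclass;
     case: c; rewrite // dP_sym.
by move=> x; exists (qclass sigma (x, false)); rewrite qlift_fhat_qclass qlift_hhat_qclass.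
Qed.

End Construction.

Theorem proposition3p10 (k : fieldType) (R : realFieldType)
  (d0 : Order.disp_t) (P : finPOrderType d0) (dP : P -> P -> R)
  (sigma : P -> P) :
  is_metric dP ->
  {homo sigma : x y / (x <= y)%O} ->
  (forall x, (x <= sigma x)%O) ->
  [/\ (* (1) preorder *)
      reflexive (hle sigma) /\ transitive (hle sigma),
      (* (2) equivalence classes, and Q is a poset with the induced order *)
      (forall (x : P) (b : bool),
          hclass sigma (x, b) =
          if sigma x == x then [set (x, false); (x, true)] else [set (x, b)]),
      is_poset (Qle (sigma:=sigma)) /\
        (forall u v, Qle (qclass sigma u) (qclass sigma v) = hle sigma u v) &
      (* (3)-(5) *)
      exists (f h : Qt sigma -> P),
        [/\ (forall u, f (qclass sigma u) = fhat sigma u) /\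
              (forall u, h (qclass sigma u) = hhat sigma u),
            galois_insertion (Qle (sigma:=sigma)) <=%O f (gQ sigma),
            galois_insertion (Qle (sigma:=sigma)) <=%O h (iQ sigma),
            (forall (M N : pmod k P) (Gam : pmod k (Qt sigma)),
                is_module <=%O M -> is_module <=%O N ->
                is_module (Qle (sigma:=sigma)) Gam ->
                mod_iso <=%O (pullback (gQ sigma) Gam) M ->
                mod_iso <=%O (pullback (iQ sigma) Gam) N ->
                galois_coupling M N (Qle (sigma:=sigma)) f (gQ sigma) h (iQ sigma) Gam /\
                coupling_cost dP f h = \big[Num.max/0]_(x : P) dP x (sigma x))
          & (forall N : pmod k P, is_module <=%O N ->
                galois_coupling (pullback sigma N) N (Qle (sigma:=sigma))
                   f (gQ sigma) h (iQ sigma) (pullback h N) /\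
                coupling_cost dP f h = \big[Num.max/0]_(x : P) dP x (sigma x))]].
Proof.
move=> dP_metric sigma_mono sigma_infl.
have Q_poset := Qle_poset sigma_mono sigma_infl.
have f_ins := galois_insertion_qlift sigma_mono sigma_infl (fhat_adjoint sigma) (fun x => erefl).
have h_ins := galois_insertion_qlift sigma_mono sigma_infl (hhat_adjoint sigma) (fun x => erefl).
have cost := coupling_cost_qlift sigma_mono sigma_infl dP_metric.
split.
- by split; [exact: hle_refl | exact: hle_trans].
- exact: hclassE.
- by split=> //; exact: Qle_qclass.
exists (qlift (fhat sigma)), (qlift (hhat sigma)); split=> //.
- by split; [exact: qlift_fhat_qclass | exact: qlift_hhat_qclass].
move=> N N_mod; have [h_mono _ _ _] := h_ins.
split=> //; split=> //; first exact: pullback_module N_mod h_mono.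
have N1 : forall x, pmor N x x = 1%:M by case: N_mod.
by split; apply: pullback_iso N1 _ => x /=; rewrite qlift_hhat_qclass.
Qed.
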